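(* Let $(Y_k)_{k\ge0}$ be a sequence in $\{0,1\}$, and let $a_0\ge0$, $\eta\in(0,1)$, $p\in(0,1]$, $(\nu_k)_k\in\ell^1_+$, $(\varepsilon_k)_k\in\ell^p_+$. Define $a_{k+1}:=(\eta+\nu_k)^{Y_k}a_k+Y_k\varepsilon_k$ for $k\in\mathbb N_0$, and $C_\nu:=\exp\big(\eta^{-1}\sum_{i=0}^\infty\nu_i\big)$. Then for all $R\ge1$, $k\ge0$ and $q\in[p,1]$, $$a_{k+1}\le C_\nu\Big[a_0+\sum_{j=0}^\infty\varepsilon_j\Big]\quad\text{and}\quad\sum_{k=0}^{R-1}Y_ka_{k+1}^q\le\frac{C_\nu^q}{1-\eta^q}\Big[(\eta a_0)^q+\sum_{j=0}^\infty\varepsilon_j^q\Big].$$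
   Context: $\ell^p_+$ denotes the set of nonnegative sequences $(x_n)_{n\ge0}$ with $\sum_nx_n^p<\infty$. *)

From Stdlib Require Import Reals.
Open Scope R_scope.

(* Real power x^q for x >= 0 and q > 0, with the convention 0^q = 0
   (Stdlib's Rpower is exp(q ln x), which gives 1 at x = 0). *)
Definition rpow (x q : R) : R := if Rle_dec x 0 then 0 else Rpower x q.

Fixpoint aseq (Y : nat -> nat) (eta : R) (nu eps : nat -> R) (a0 : R) (k : nat) : R :=
  match k with
  | O => a0
  | S k' => (eta + nu k') ^ (Y k') * aseq Y eta nu eps a0 k' + INR (Y k') * eps k'
  end.

From Stdlib Require Import Reals Lra Lia.
Open Scope R_scope.

(* With g_k := exp (nu_k / eta) >= 1 we have eta + nu_k <= eta g_k, and the running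
   products G_k := g_0 ... g_(k-1) stay below C_nu.  By induction
   a_k <= G_k (a_0 + eps_0 + ... + eps_(k-1)).  For the second bound, subadditivity
   of t |-> t^q gives a_(k+1)^q <= eta^q g_k^q a_k^q + eps_k^q whenever Y_k = 1, which
   makes
     (1 - eta^q) sum_(i<k) Y_i a_(i+1)^q + eta^q a_k^q
       <= G_k^q (eta^q a_0^q + sum_(i<k) eps_i^q)
   an invariant; dropping eta^q a_k^q and bounding G_k by C_nu concludes. *)

Lemma exp_le x y : x <= y -> exp x <= exp y.
Proof. intros [h|<-]; [left; apply exp_increasing|]; lra. Qed.

Lemma rpow_0 q : rpow 0 q = 0.
Proof. unfold rpow; destruct (Rle_dec 0 0); [reflexivity|lra]. Qed.

Lemma rpow_Rpower x q : 0 < x -> rpow x q = Rpower x q.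
Proof. intros; unfold rpow; destruct (Rle_dec x 0); [lra|auto]. Qed.

Lemma rpow_nonneg x q : 0 <= rpow x q.
Proof.
  unfold rpow; destruct (Rle_dec x 0); [lra|].
  left; apply exp_pos.
Qed.

Lemma rpow_1 q : rpow 1 q = 1.
Proof. rewrite rpow_Rpower by lra. unfold Rpower. rewrite ln_1, Rmult_0_r. apply exp_0. Qed.

Lemma rpow_mult x y q : 0 <= x -> 0 <= y -> rpow (x * y) q = rpow x q * rpow y q.
Proof.
  intros [hx|<-] [hy|<-]; rewrite ?Rmult_0_l, ?Rmult_0_r, ?rpow_0; try ring.
  rewrite !rpow_Rpower by (try apply Rmult_lt_0_compat; auto).
  symmetry; apply Rpower_mult_distr; auto.
Qed.

Lemma rpow_le x y q : 0 <= q -> 0 <= x <= y -> rpow x q <= rpow y q.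
Proof.
  intros hq [[hx|<-] hxy].
  - rewrite !rpow_Rpower by lra. apply Rle_Rpower_l; lra.
  - rewrite rpow_0. apply rpow_nonneg.
Qed.

Lemma rpow_ge_1 x q : 0 <= q -> 1 <= x -> 1 <= rpow x q.
Proof. intros hq hx. rewrite <- (rpow_1 q). apply rpow_le; lra. Qed.

Lemma rpow_lt_1 x q : 0 < q -> 0 < x < 1 -> 0 < rpow x q < 1.
Proof.
  intros hq hx. rewrite <- (rpow_1 q), !rpow_Rpower by lra.
  split; [apply exp_pos | apply Rlt_Rpower_l; lra].
Qed.

Lemma rpow_ge_self t q : q <= 1 -> 0 <= t <= 1 -> t <= rpow t q.
Proof.
  intros hq [[ht|<-] ht1]; [|rewrite rpow_0; lra].
  rewrite rpow_Rpower by lra. unfold Rpower.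
  rewrite <- (exp_ln t) at 1 by lra.
  assert (ln t <= 0).
  { rewrite <- ln_1. destruct ht1 as [ht1|ht1]; [left; apply ln_increasing|subst]; lra. }
  apply exp_le. nra.
Qed.

Lemma rpow_pair_sum_ge_1 u v q : q <= 1 -> 0 <= u -> 0 <= v -> u + v = 1 ->
  1 <= rpow u q + rpow v q.
Proof.
  intros hq hu hv huv.
  pose proof (rpow_ge_self u q hq ltac:(lra)).
  pose proof (rpow_ge_self v q hq ltac:(lra)).
  lra.
Qed.

Lemma rpow_plus_le x y q : 0 <= q <= 1 -> 0 <= x -> 0 <= y ->
  rpow (x + y) q <= rpow x q + rpow y q.
Proof.
  intros hq [hx|<-] [hy|<-]; rewrite ?Rplus_0_l, ?Rplus_0_r, ?rpow_0; try lra.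
  set (s := x + y).
  assert (hs : 0 < s) by (unfold s; lra).
  assert (hxs : 0 < x / s) by (apply Rdiv_lt_0_compat; lra).
  assert (hys : 0 < y / s) by (apply Rdiv_lt_0_compat; lra).
  assert (hnorm : 1 <= rpow (x / s) q + rpow (y / s) q).
  { apply rpow_pair_sum_ge_1; try lra. unfold s; field; lra. }
  replace x with (s * (x / s)) by (field; lra).
  replace y with (s * (y / s)) by (field; lra).
  rewrite !rpow_mult by lra.
  pose proof (rpow_nonneg s q).
  nra.
Qed.

Lemma Rdiv_nonneg x y : 0 <= x -> 0 < y -> 0 <= x / y.
Proof. intros hx hy. apply Rmult_le_pos; [exact hx | left; apply Rinv_0_lt_compat, hy]. Qed.

Lemma exp_ge_1 x : 0 <= x -> 1 <= exp x.
Proof. pose proof (exp_ineq1_le x); lra. Qed.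

Lemma plus_le_mult_exp eta x : 0 < eta -> eta + x <= eta * exp (x / eta).
Proof.
  intros heta. pose proof (exp_ineq1_le (x / eta)).
  replace (eta + x) with (eta * (1 + x / eta)) by (field; lra).
  apply Rmult_le_compat_l; lra.
Qed.

(* [psum f k] sums the first [k] terms, whereas [sum_f_R0 f n] sums [n + 1] terms. *)
Fixpoint psum (f : nat -> R) (k : nat) : R :=
  match k with O => 0 | S k' => psum f k' + f k' end.

Lemma sum_f_R0_psum f n : sum_f_R0 f n = psum f (S n).
Proof. induction n as [|n IH]; simpl in *; [lra|]. rewrite IH. reflexivity. Qed.

Lemma psum_nonneg f k : (forall i, 0 <= f i) -> 0 <= psum f k.
Proof. intros hf; induction k as [|k IH]; simpl; [lra|]. pose proof (hf k); lra. Qed.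

Lemma psum_le_infinite_sum f L : (forall i, 0 <= f i) -> infinite_sum f L ->
  forall k, psum f k <= L.
Proof.
  intros hf hL.
  assert (hbound : forall n, sum_f_R0 f n <= L).
  { apply growing_ineq; auto. intro n; simpl. pose proof (hf (S n)); lra. }
  intros [|k]; [|rewrite <- sum_f_R0_psum; apply hbound].
  simpl. pose proof (hbound O); pose proof (hf O); simpl in *; lra.
Qed.

Section Recurrence.

Variables (Y : nat -> nat) (eta : R) (nu eps : nat -> R) (a0 : R).
Hypothesis HY : forall k, Y k = 0%nat \/ Y k = 1%nat.
Hypothesis Ha0 : 0 <= a0.
Hypothesis Heta : 0 < eta < 1.
Hypothesis Hnu0 : forall k, 0 <= nu k.
Hypothesis Heps0 : forall k, 0 <= eps k.

Local Notation a := (aseq Y eta nu eps a0).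

Lemma aseq_S_Y0 k : Y k = 0%nat -> a (S k) = a k.
Proof. intros hY; simpl; rewrite hY; simpl; ring. Qed.

Lemma aseq_S_Y1 k : Y k = 1%nat -> a (S k) = (eta + nu k) * a k + eps k.
Proof. intros hY; simpl; rewrite hY; simpl; ring. Qed.

Lemma aseq_nonneg k : 0 <= a k.
Proof.
  induction k as [|k IH]; [exact Ha0|].
  pose proof (Hnu0 k); pose proof (Heps0 k).
  destruct (HY k) as [hY|hY]; [rewrite aseq_S_Y0 | rewrite aseq_S_Y1]; auto.
  apply Rplus_le_le_0_compat; [apply Rmult_le_pos|]; lra.
Qed.

Definition growth k := exp (psum nu k / eta).

Lemma growth_0 : growth 0 = 1.
Proof. unfold growth; simpl. rewrite Rdiv_0_l. apply exp_0. Qed.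

Lemma growth_S k : growth (S k) = growth k * exp (nu k / eta).
Proof. unfold growth; simpl. rewrite <- exp_plus. f_equal. field. lra. Qed.

Lemma growth_ge_1 k : 1 <= growth k.
Proof. apply exp_ge_1, Rdiv_nonneg; [apply psum_nonneg, Hnu0 | lra]. Qed.

Lemma exp_nu_ge_1 k : 1 <= exp (nu k / eta).
Proof. apply exp_ge_1, Rdiv_nonneg; [apply Hnu0 | lra]. Qed.

Lemma growth_le_exp_sum Snu : infinite_sum nu Snu -> forall k, growth k <= exp (/ eta * Snu).
Proof.
  intros hSnu k. apply exp_le. rewrite Rmult_comm.
  apply Rmult_le_compat_r; [left; apply Rinv_0_lt_compat; lra|].
  apply psum_le_infinite_sum; auto.
Qed.

Lemma aseq_S_le k : a (S k) <= exp (nu k / eta) * a k + eps k.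
Proof.
  pose proof (aseq_nonneg k); pose proof (Heps0 k).
  pose proof (exp_nu_ge_1 k).
  pose proof (plus_le_mult_exp eta (nu k) ltac:(lra)).
  destruct (HY k) as [hY|hY]; [rewrite aseq_S_Y0 | rewrite aseq_S_Y1]; auto; [nra|].
  assert (eta + nu k <= exp (nu k / eta)) by nra.
  apply Rplus_le_compat_r, Rmult_le_compat_r; lra.
Qed.

Lemma aseq_le_growth k : a k <= growth k * (a0 + psum eps k).
Proof.
  induction k as [|k IH]; [rewrite growth_0; simpl; lra|].
  rewrite growth_S; simpl psum.
  pose proof (aseq_S_le k); pose proof (aseq_nonneg k); pose proof (Heps0 k).
  pose proof (growth_ge_1 k); pose proof (psum_nonneg eps k Heps0).
  pose proof (exp_nu_ge_1 k).
  set (g := exp (nu k / eta)) in *.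
  assert (g * a k <= g * (growth k * (a0 + psum eps k))) by (apply Rmult_le_compat_l; lra).
  assert (eps k <= growth k * g * eps k).
  { rewrite <- (Rmult_1_l (eps k)) at 1. apply Rmult_le_compat_r; nra. }
  assert (growth k * (a0 + psum eps k) <= growth k * g * (a0 + psum eps k)).
  { rewrite <- (Rmult_1_r (growth k)) at 1.
    apply Rmult_le_compat_r, Rmult_le_compat_l; lra. }
  nra.
Qed.

Lemma aseq_S_rpow_le k q : Y k = 1%nat -> 0 <= q <= 1 ->
  rpow (a (S k)) q <= rpow eta q * rpow (exp (nu k / eta)) q * rpow (a k) q + rpow (eps k) q.
Proof.
  intros hY hq. rewrite aseq_S_Y1 by exact hY.
  pose proof (aseq_nonneg k); pose proof (Hnu0 k); pose proof (Heps0 k).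
  pose proof (exp_nu_ge_1 k).
  rewrite <- !rpow_mult by (try apply Rmult_le_pos; lra).
  eapply Rle_trans; [apply rpow_plus_le; try apply Rmult_le_pos; lra|].
  apply Rplus_le_compat_r, rpow_le; [lra|].
  split; [apply Rmult_le_pos; lra|].
  apply Rmult_le_compat_r, plus_le_mult_exp; lra.
Qed.

(* In a step with [Y k = 1] the new summand [a (S k) ^ q], counted with total weight
   [(1 - eta^q) + eta^q = 1], is paid for by the old term [eta^q a_k^q]. *)
Lemma weighted_rpow_sum_le q k : 0 <= q <= 1 ->
  (1 - rpow eta q) * psum (fun i => INR (Y i) * rpow (a (S i)) q) k + rpow eta q * rpow (a k) q
  <= rpow (growth k) q * (rpow eta q * rpow a0 q + psum (fun j => rpow (eps j) q) k).
Proof.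
  intros hq.
  set (s := rpow eta q).
  assert (hs : 0 <= s <= 1).
  { split; [apply rpow_nonneg|]. rewrite <- (rpow_1 q). apply rpow_le; lra. }
  induction k as [|k IH].
  { rewrite growth_0, rpow_1. simpl. lra. }
  rewrite growth_S, rpow_mult by (pose proof (growth_ge_1 k); pose proof (exp_nu_ge_1 k); lra).
  cbn [psum]. rewrite <- (Rplus_assoc (s * rpow a0 q)).
  set (P := psum (fun i => INR (Y i) * rpow (a (S i)) q) k) in *.
  set (B := s * rpow a0 q + psum (fun j => rpow (eps j) q) k) in *.
  set (G := rpow (growth k) q) in *.
  set (g := rpow (exp (nu k / eta)) q).
  assert (hG : 1 <= G) by (apply rpow_ge_1; [lra | apply growth_ge_1]).
  assert (hg : 1 <= g) by (apply rpow_ge_1; [lra | apply exp_nu_ge_1]).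
  assert (hP : 0 <= P).
  { apply psum_nonneg. intro i. apply Rmult_le_pos; [apply pos_INR | apply rpow_nonneg]. }
  assert (hB : 0 <= B).
  { pose proof (rpow_nonneg a0 q).
    pose proof (psum_nonneg (fun j => rpow (eps j) q) k (fun j => rpow_nonneg _ _)).
    unfold B; nra. }
  pose proof (rpow_nonneg (a k) q) as hA.
  pose proof (rpow_nonneg (eps k) q) as hE.
  assert (hGB : G * B <= G * g * (B + rpow (eps k) q)).
  { rewrite Rmult_assoc. apply Rmult_le_compat_l; nra. }
  destruct (HY k) as [hY|hY]; rewrite hY.
  - rewrite aseq_S_Y0 by exact hY. change (INR 0) with 0. rewrite Rmult_0_l, Rplus_0_r. lra.
  - pose proof (aseq_S_rpow_le k q hY hq) as hstep. fold s g in hstep.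
    assert (hP' : (1 - s) * P <= g * ((1 - s) * P)).
    { rewrite <- (Rmult_1_l ((1 - s) * P)) at 1.
      apply Rmult_le_compat_r; [apply Rmult_le_pos|]; lra. }
    assert (hIH' : g * ((1 - s) * P + s * rpow (a k) q) <= g * (G * B))
      by (apply Rmult_le_compat_l; lra).
    assert (hE' : rpow (eps k) q <= G * g * rpow (eps k) q).
    { rewrite <- (Rmult_1_l (rpow (eps k) q)) at 1.
      apply Rmult_le_compat_r; [lra|]. nra. }
    change (INR 1) with 1. nra.
Qed.

Lemma rpow_sum_le_growth q k : 0 < q <= 1 ->
  psum (fun i => INR (Y i) * rpow (a (S i)) q) k
  <= rpow (growth k) q / (1 - rpow eta q)
     * (rpow eta q * rpow a0 q + psum (fun j => rpow (eps j) q) k).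
Proof.
  intros hq.
  pose proof (weighted_rpow_sum_le q k ltac:(lra)) as hinv.
  pose proof (rpow_lt_1 eta q ltac:(lra) Heta) as hs.
  pose proof (rpow_nonneg eta q); pose proof (rpow_nonneg (a k) q).
  apply Rmult_le_reg_l with (1 - rpow eta q); [lra|].
  unfold Rdiv. rewrite <- !Rmult_assoc, Rinv_r_simpl_m by lra.
  nra.
Qed.

End Recurrence.

Theorem lemma3p5
  (Y : nat -> nat) (HY : forall k, Y k = 0%nat \/ Y k = 1%nat)
  (a0 eta p : R) (nu eps : nat -> R)
  (Ha0 : 0 <= a0) (Heta : 0 < eta < 1) (Hp : 0 < p <= 1)
  (Hnu0 : forall k, 0 <= nu k) (Snu : R) (Hnu : infinite_sum nu Snu)
  (Heps0 : forall k, 0 <= eps k)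
  (Heps : exists Sp, infinite_sum (fun k => rpow (eps k) p) Sp) :
  let C := exp (/ eta * Snu) in
  forall (N k : nat) (q Se Sq : R),
    (1 <= N)%nat -> p <= q <= 1 ->
    infinite_sum eps Se ->
    infinite_sum (fun j => rpow (eps j) q) Sq ->
    aseq Y eta nu eps a0 (S k) <= C * (a0 + Se) /\
    sum_f_R0 (fun i => INR (Y i) * rpow (aseq Y eta nu eps a0 (S i)) q) (N - 1)
      <= rpow C q / (1 - rpow eta q) * (rpow (eta * a0) q + Sq).
Proof.
  intros C N k q Se Sq HN Hq HSe HSq.
  pose proof (growth_le_exp_sum eta nu Heta Hnu0 Snu Hnu) as hC.
  pose proof (growth_ge_1 eta nu Heta Hnu0) as hG1.
  split.
  - eapply Rle_trans; [apply (aseq_le_growth Y eta nu eps a0); assumption|].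
    pose proof (psum_nonneg eps (S k) Heps0).
    pose proof (psum_le_infinite_sum eps Se Heps0 HSe (S k)).
    pose proof (hG1 (S k)). apply Rmult_le_compat; try apply hC; lra.
  - destruct N as [|n]; [inversion HN|].
    replace (S n - 1)%nat with n by lia.
    rewrite sum_f_R0_psum, rpow_mult by lra.
    eapply Rle_trans; [apply (rpow_sum_le_growth Y eta nu eps a0); auto; lra|].
    pose proof (rpow_lt_1 eta q ltac:(lra) Heta).
    pose proof (rpow_nonneg a0 q).
    pose proof (psum_nonneg _ (S n) (fun j => rpow_nonneg (eps j) q)).
    pose proof (psum_le_infinite_sum _ Sq (fun j => rpow_nonneg (eps j) q) HSq (S n)).
    unfold Rdiv. rewrite !Rmult_assoc.
    assert (0 < / (1 - rpow eta q)) by (apply Rinv_0_lt_compat; lra).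
    apply Rmult_le_compat; [apply rpow_nonneg | apply Rmult_le_pos; nra | |].
    + apply rpow_le; [lra|]. pose proof (hG1 (S n)). split; [lra | apply hC].
    + apply Rmult_le_compat_l; lra.
Qed.
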